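(* Let $T\in\mathbb{N}$, $\alpha\in(0,1)$, $\lambda\ge0$, $\delta\in(0,1)$, and let $\mathcal{H}=\{k/(H-1):k=0,\dots,H-1\}$ with $H\ge2$. Run the ExAUL algorithm (described in the context) with $\eta=2\gamma=\sqrt{\ln|\mathcal{H}|/T}$ against an adaptive adversary. Then with probability at least $1-\delta$, $$\mathrm{Reg}_T:=\sum_{t=1}^T\ell_t(\tau_t)-\min_{\tau\in\mathcal{H}}\sum_{t=1}^T\ell_t(\tau)\le4\sqrt{T\ln|\mathcal{H}|}+\Big(1+\sqrt{\frac{T}{\ln|\mathcal{H}|}}\Big)\ln\frac2\delta.$$
   Context: Protocol. For $t=1,\dots,T$: an adaptive adversary chooses an input $\mathbf{x}_t$ (determining a score $f_t=f(\mathbf{x}_t,G(\mathbf{x}_t))\in[0,1)$ for a fixed generator $G$ and fixed scoring function $f$) and a feedback value $c_t\in[0,1]$ for the answer $G(\mathbf{x}_t)$; these may depend on $\tau_1,\dots,\tau_{t-1}$ but not on $\tau_t$. The learner picks $\tau_t\in\mathcal{H}$; it answers if $f_t\ge\tau_t$ and outputs IDK otherwise; it observes $f_t$ and, as partial feedback, $e_t$, which equals $c_t$ when it answers. Losses: for $\tau\in\mathcal{H}$, $a_t(\tau)=\mathbf{1}(f_t<\tau)$, $d_t(\tau,\alpha)=\mathbf{1}(f_t\ge\tau)c_t-\alpha\mathbf{1}(f_t\ge\tau)+\alpha$, $\ell_t(\tau)=\frac{a_t(\tau)+\lambda d_t(\tau,\alpha)}{1+\lambda}\in[0,1]$. ExAUL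 algorithm (parameters $\eta,\gamma>0$): $w_1(\tau)=1/|\mathcal{H}|$. At round $t$: $p_t(\tau)=w_t(\tau)/\sum_{\tau'}w_t(\tau')$; draw $\tau_t\sim p_t$; observe $f_t,e_t$; let $\mathcal{H}_t(\tau')=\{\tau\in\mathcal{H}:\tau\le f_t\}$ if $f_t\ge\tau'$ and $\{\tau\in\mathcal{H}:\tau>f_t\}$ otherwise; set for all $\tau\in\mathcal{H}$ $$\tilde\ell_t(\tau)=\frac{\ell_t(\tau)\,\mathbf{1}(\tau\in\mathcal{H}_t(\tau_t))}{\gamma+\sum_{\bar\tau\in\mathcal{H}_t(\tau_t)}\mathbf{1}(\tau\in\mathcal{H}_t(\bar\tau))\,p_t(\bar\tau)};$$ update $w_{t+1}(\tau)\propto\exp(-\eta\sum_{s=1}^t\tilde\ell_s(\tau))$. *)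

From HB Require Import structures.
From mathcomp Require Import all_boot all_order all_algebra.
From mathcomp Require Import reals.
From mathcomp.analysis Require Import sequences exp.
Set Implicit Arguments. Unset Strict Implicit. Unset Printing Implicit Defensive.
Import Order.TTheory GRing.Theory Num.Theory.
Local Open Scope ring_scope.

(* Hypothesis set H = {k/(H-1) : k = 0..H-1} with H = n.+1, indexed by 'I_n.+1.
   Rounds are 0-based: round t (t = 0..T-1) corresponds to round t+1 of the paper.
   A history h : seq 'I_n.+1 is the list of indices of the thresholds chosen
   in the previous rounds (so size h = t at round t).
   The adaptive adversary is given by f, c : nat -> seq 'I_n.+1 -> R:
   at round t with past choices h it plays f_t = f t h and c_t = c t h. *)
Section ExAUL.
Variable R : realType.
Variable n : nat.
Local Notation I := 'I_n.+1.

Definition thr (k : I) : R := k%:R / n%:R.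

Variables (alpha lambda eta gamma : R).
Variables (f c : nat -> seq I -> R).

Definition a_loss (ft tau : R) : R := ((ft < tau)%R : bool)%:R.
Definition d_loss (ft ct tau : R) : R :=
  ((tau <= ft)%R : bool)%:R * ct - alpha * ((tau <= ft)%R : bool)%:R + alpha.
Definition loss (ft ct tau : R) : R :=
  (a_loss ft tau + lambda * d_loss ft ct tau) / (1 + lambda).

Definition inHt (ft tau' tau : R) : bool :=
  if tau' <= ft then tau <= ft else ft < tau.

Definition softmax (L : I -> R) (k : I) : R :=
  expR (- eta * L k) / \sum_(j : I) expR (- eta * L j).

Definition ltilde (t : nat) (h : seq I) (k : I) (p : I -> R) (j : I) : R :=
  let ft := f t h in let ct := c t h in
  loss ft ct (thr j) * (inHt ft (thr k) (thr j) : bool)%:R /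
  (gamma + \sum_(b : I | inHt ft (thr k) (thr b))
              (inHt ft (thr b) (thr j) : bool)%:R * p b).

Fixpoint cumL_aux (t : nat) (h rest : seq I) (L : I -> R) : I -> R :=
  match rest with
  | [::] => L
  | k :: r => cumL_aux t.+1 (rcons h k) r
                (fun j => L j + ltilde t h k (softmax L) j)
  end.
Definition cumL (h : seq I) : I -> R := cumL_aux 0 [::] h (fun _ => 0).

Definition pdist (h : seq I) : I -> R := softmax (cumL h).

Fixpoint path_prob (h rest : seq I) : R :=
  match rest with
  | [::] => 1
  | k :: r => pdist h k * path_prob (rcons h k) r
  end.

Variable T : nat.

Definition learner_loss (s : T.-tuple I) : R :=
  \sum_(i < T) loss (f i (take i s)) (c i (take i s)) (thr (tnth s i)).
Definition fixed_loss (s : T.-tuple I) (k : I) : R :=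
  \sum_(i < T) loss (f i (take i s)) (c i (take i s)) (thr k).
Definition regret (s : T.-tuple I) : R :=
  learner_loss s - \big[Num.min/fixed_loss s ord0]_(k : I) fixed_loss s k.

Definition prob_regret_le (B : R) : R :=
  \sum_(s : T.-tuple I | regret s <= B) path_prob [::] s.
End ExAUL.

From Pilot Require Import Defs.
From HB Require Import structures.
From mathcomp Require Import all_boot all_order all_algebra.
From mathcomp Require Import reals.
From mathcomp.analysis Require Import sequences exp.
From mathcomp.analysis Require Import topology normedtype derive.
From mathcomp Require Import ring lra.
Set Implicit Arguments. Unset Strict Implicit. Unset Printing Implicit Defensive.
Import Order.TTheory GRing.Theory Num.Theory numFieldNormedType.Exports.
Local Open Scope ring_scope.

(* In a round, the estimate [ltilde] and the losses depend on a threshold only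
   through its side: whether it answers ([thr k <= f_t]) or abstains.  So all
   round quantities are governed by the two side masses of [p_t], and three
   facts follow: the exponential-weights step (from [e^-x <= 1 - x + x^2/2] and
   [sum_j p_j ltilde_j^2 <= ltilde(tau_t)]); the identity
   [loss(tau_t) = <p_t, ltilde> + gamma ltilde(tau_t)]; and, by the Pade bound
   for [e^y], that [exp (2 gamma (ltilde(tau) - loss(tau)))] and
   [exp (2 gamma (ltilde(tau_t) - loss_answer - loss_abstain))] have conditional
   mean at most 1.  The latter give [H + 1] exponential supermartingales along
   the play, so by Markov's inequality and a union bound, with probability
   [1 - delta] their sums stay below [ln (2 / delta)] and
   [ln H + ln (2 / delta)].  On that event the potential
   [sum_j exp (- eta L_j)] bounds the regret deterministically, and
   [eta = 2 gamma = sqrt (ln H / T)] balances the terms. *)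

Section ExpInequalities.
Context {R : realType}.

Lemma le_at0_of_derive_ge0 (F dF : R -> R) (y : R) :
  (forall x, is_derive x (1 : R) F (dF x)) -> (forall x, 0 < x -> 0 <= dF x) ->
  0 <= y -> F 0 <= F y.
Proof.
move=> F' dF_ge0 y_ge0; apply: (@ger0_derive1_ndecry R F 0) => //.
- by move=> x; rewrite in_itv /= andbT => x_gt0; rewrite derive1E derive_val dF_ge0.
- apply: continuous_subspaceT => x.
  by apply/differentiable_continuous/derivable1_diffP; case: (F' x).
Qed.

Lemma expRN_mul1D_le1 (x : R) : expR (- x) * (1 + x) <= 1.
Proof.
by rewrite -[leRHS](expRxMexpNx_1 x) [leRHS]mulrC ler_wpM2l ?expR_ge0 ?expR_ge1Dx.
Qed.

Lemma expRN_le_taylor2 (x : R) : 0 <= x -> expR (- x) <= 1 - x + x ^+ 2 / 2.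
Proof.
move=> x_ge0.
pose G (y : R) := expR y * (1 - y + y ^+ 2 / 2).
have G' y : is_derive y (1 : R) G (expR y * (y ^+ 2 / 2)).
  by apply: is_derive_eq; rewrite !scaler0 !add0r /GRing.scale /= !mulr1; field.
have G_ge1 : 1 <= G x.
  have := @le_at0_of_derive_ge0 G _ x G'.
  rewrite /G expR0 mul1r expr0n /= subr0 mul0r addr0; apply => // y y_gt0.
  by rewrite mulr_ge0 ?expR_ge0 // divr_ge0 ?sqr_ge0.
rewrite -[leLHS]mulr1; apply: le_trans (ler_wpM2l (expR_ge0 _) G_ge1) _.
by rewrite /G mulrA [expR (- x) * _]mulrC expRxMexpNx_1 mul1r.
Qed.

Lemma expR_pade_le (y : R) : 0 <= y -> (2 - y) * expR y <= 2 + y.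
Proof.
move=> y_ge0; rewrite -subr_ge0.
pose G (x : R) := 2 + x - (2 - x) * expR x.
have G' x : is_derive x (1 : R) G (1 - (1 - x) * expR x).
  by apply: is_derive_eq; rewrite /GRing.scale /=; ring.
have := @le_at0_of_derive_ge0 G _ y G'.
rewrite /G expR0 addr0 subr0 mulr1 subrr; apply => // x x_gt0.
rewrite subr_ge0 -[leRHS](expRxMexpNx_1 x) [leRHS]mulrC ler_wpM2r ?expR_ge0 //.
by have := expR_ge1Dx (- x); lra.
Qed.

Lemma mul_expR_ratio_le (g P l : R) : 0 < g -> 0 <= P -> 0 <= l <= 1 ->
  P * expR (2 * g * (l / (g + P))) <= P + 2 * g * l.
Proof.
(* With [y := 2 g l / (g + P) < 2], Pade gives [e^y <= 1 + 2 y / (2 - y)], and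
   [2 P <= (2 - y) (g + P)] because [y (g + P) = 2 g l <= 2 g]. *)
move=> g_gt0 P_ge0 /andP[l_ge0 l_le1].
have [->|P_neq0] := eqVneq P 0; first by rewrite mul0r add0r; nra.
have P_gt0 : 0 < P by rewrite lt_def P_neq0.
set y := 2 * g * (l / (g + P)).
have yE : y * (g + P) = 2 * g * l by rewrite /y; field; lra.
have y_ge0 : 0 <= y by rewrite /y !mulr_ge0 ?invr_ge0; lra.
have y_lt2 : y < 2.
  by rewrite -(ltr_pM2r (_ : 0 < g + P)) ?yE; nra.
have pade := ler_wpM2l P_ge0 (@expR_pade_le y y_ge0).
have : (2 - y) * (P * expR y) <= (2 - y) * (P + 2 * g * l).
  rewrite mulrCA; apply: le_trans pade _; rewrite -yE.
  have : 0 <= y * (2 * g - y * (g + P)) by rewrite yE mulr_ge0 //; nra.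
  nra.
by rewrite ler_pM2l; lra.
Qed.

End ExpInequalities.

Section FiniteSums.
Variables (V : nmodType) (I : finType).

Lemma sum_option (F : option I -> V) :
  \sum_(i : option I) F i = F None + \sum_(j : I) F (Some j).
Proof.
rewrite (bigD1 None) //=; congr (_ + _).
rewrite (reindex_omap Some id) => [|[] //].
by apply: eq_bigl => j; rewrite /= eqxx.
Qed.

Lemma sum_tuple0 (F : 0.-tuple I -> V) : \sum_(s : 0.-tuple I) F s = F [tuple].
Proof.
rewrite (eq_bigr (fun _ => F [tuple])) => [|s _]; last by rewrite tuple0.
by rewrite sumr_const card_tuple expn0.
Qed.

Lemma sum_tupleS m (F : m.+1.-tuple I -> V) :
  \sum_(s : m.+1.-tuple I) F s = \sum_(k : I) \sum_(s : m.-tuple I) F [tuple of k :: s].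
Proof.
rewrite pair_big (reindex (fun p : I * m.-tuple I => [tuple of p.1 :: p.2])) //=.
exists (fun s : m.+1.-tuple I => (thead s, [tuple of behead s])) => [[k s] _|s _].
  by congr pair; apply: val_inj.
by rewrite [RHS]tuple_eta.
Qed.

End FiniteSums.

Section Distributions.
Context {R : realType}.

Lemma exp_weights_step {I : finType} (p x : I -> R) (eta : R) :
  (forall i, 0 <= p i) -> \sum_i p i = 1 -> (forall i, 0 <= x i) -> 0 <= eta ->
  \sum_i p i * expR (- eta * x i) <=
  expR (- eta * (\sum_i p i * x i) + eta ^+ 2 / 2 * \sum_i p i * x i ^+ 2).
Proof.
move=> p_ge0 p_sum1 x_ge0 eta_ge0; apply: le_trans (expR_ge1Dx _).
have -> : 1 + (- eta * (\sum_i p i * x i) + eta ^+ 2 / 2 * \sum_i p i * x i ^+ 2) =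
          \sum_i p i * (1 - eta * x i + (eta * x i) ^+ 2 / 2).
  rewrite -[X in X + _ = _]p_sum1 !mulr_sumr -!big_split /=; apply: eq_bigr => i _; ring.
apply: ler_sum => i _; rewrite ler_wpM2l // mulNr.
exact/expRN_le_taylor2/mulr_ge0.
Qed.

Lemma exp_markov_union_bound {S J : finType} (mu : S -> R) (Z : J -> S -> R)
    (th : J -> R) (P : pred S) :
  (forall s, 0 <= mu s) -> \sum_s mu s = 1 ->
  (forall j, \sum_s mu s * expR (Z j s) <= 1) ->
  (forall s, (forall j, Z j s <= th j) -> P s) ->
  1 - \sum_j expR (- th j) <= \sum_(s | P s) mu s.
Proof.
move=> mu_ge0 mu_sum1 Z_mgf good.
pose Phi s := \sum_j expR (Z j s - th j).
have Phi_ge0 s : 0 <= Phi s by apply: sumr_ge0 => j _; exact: expR_ge0.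
have Phi_ge1 s : ~~ P s -> 1 <= Phi s.
  move=> bad; have [j|] := pickP (fun j => ~~ (Z j s <= th j)).
    rewrite -ltNge => th_lt_Z; rewrite /Phi (bigD1 j) //= -[1]addr0.
    by rewrite lerD ?sumr_ge0 // => [|i _]; rewrite ?expR_ge0 // -expR0 ler_expR; lra.
  by move=> all_le; rewrite good in bad => // j; have := all_le j => /negbFE.
have bad_le : \sum_(s | ~~ P s) mu s <= \sum_j expR (- th j).
  apply: le_trans (_ : \sum_s mu s * Phi s <= _).
    rewrite [leRHS](bigID P) /= -[leLHS]add0r lerD //.
      by apply: sumr_ge0 => s _; exact: mulr_ge0.
    by apply: ler_sum => s bad; rewrite -[leLHS]mulr1 ler_wpM2l ?Phi_ge1.
  rewrite /Phi; under eq_bigr do rewrite mulr_sumr.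
  rewrite exchange_big /=; apply: ler_sum => j _.
  under eq_bigr do rewrite expRD mulrA.
  by rewrite -mulr_suml -[leRHS]mul1r ler_wpM2r ?expR_ge0.
by move: mu_sum1; rewrite (bigID P) /=; lra.
Qed.

End Distributions.

Section Round.
Variables (R : realType) (n : nat).
Local Notation I := 'I_n.+1.
Variables (alpha lambda gamma : R) (f c : nat -> seq I -> R).
Variables (t : nat) (h : seq I) (p : I -> R).
Hypotheses (gamma_gt0 : 0 < gamma) (lambda_ge0 : 0 <= lambda).
Hypotheses (alpha_ge0 : 0 <= alpha) (alpha_le1 : alpha <= 1).
Hypothesis c_01 : 0 <= c t h <= 1.
Hypotheses (p_ge0 : forall k, 0 <= p k) (p_sum1 : \sum_k p k = 1).

Local Notation thr := (@thr R n).
Local Notation ltilde := (ltilde alpha lambda gamma f c t h).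

Definition answers (k : I) : bool := thr k <= f t h.
Definition side_mass (b : bool) : R := \sum_(k | answers k == b) p k.
Definition side_loss (b : bool) : R :=
  if b then lambda * c t h / (1 + lambda) else (1 + lambda * alpha) / (1 + lambda).
Definition side_est (b : bool) : R := side_loss b / (gamma + side_mass b).

Lemma inHt_thr (k j : I) : inHt (f t h) (thr k) (thr j) = (answers j == answers k).
Proof. by rewrite /inHt /answers ltNge; case: (thr k <= _); case: (thr j <= _). Qed.

Lemma loss_thr (j : I) : loss alpha lambda (f t h) (c t h) (thr j) = side_loss (answers j).
Proof.
rewrite /loss /a_loss /d_loss /side_loss /answers ltNge.
by case: (thr j <= _) => /=; congr (_ / _); ring.
Qed.

Lemma ltilde_thr (k j : I) :
  ltilde k p j = if answers j == answers k then side_est (answers k) else 0.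
Proof.
rewrite /Defs.ltilde /side_est /side_mass loss_thr inHt_thr.
have [jk|] := eqVneq; last by rewrite mulr0 mul0r.
rewrite mulr1 jk; congr (_ / (_ + _)); under eq_bigl do rewrite inHt_thr.
by apply: eq_bigr => b /eqP bk; rewrite inHt_thr jk bk eqxx mul1r.
Qed.

Lemma ltilde_chosen (k : I) : ltilde k p k = side_est (answers k).
Proof. by rewrite ltilde_thr eqxx. Qed.

Lemma sum_by_side (G : bool -> R) :
  \sum_k p k * G (answers k) = \sum_(b : bool) side_mass b * G b.
Proof.
rewrite (partition_big answers predT) //=; apply: eq_bigr => b _.
by rewrite /side_mass mulr_suml; apply: eq_bigr => k /eqP ->.
Qed.

Lemma sum_side_mass : \sum_(b : bool) side_mass b = 1.
Proof.
have := sum_by_side (fun _ => 1); under eq_bigr do rewrite mulr1.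
by under [X in _ = X -> _]eq_bigr do rewrite mulr1; rewrite p_sum1 => <-.
Qed.

Lemma side_mass_ge0 b : 0 <= side_mass b.
Proof. exact: sumr_ge0. Qed.

Lemma side_loss_01 b : 0 <= side_loss b <= 1.
Proof.
have [c_ge0 c_le1] := andP c_01; move: lambda_ge0 alpha_ge0 alpha_le1 => ? ? ?.
have lambda1_gt0 : 0 < 1 + lambda by lra.
by rewrite /side_loss; case: b; rewrite divr_ge0 ?ler_pdivrMr //=; nra.
Qed.

Lemma side_loss_sum_le2 : side_loss true + side_loss false <= 2.
Proof. by have := side_loss_01 true; have := side_loss_01 false; lra. Qed.

Lemma side_est_ge0 b : 0 <= side_est b.
Proof.
have := side_loss_01 b; have := side_mass_ge0 b; have := gamma_gt0.
by rewrite /side_est => ? ? /andP[? _]; apply: divr_ge0; lra.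
Qed.

Lemma side_mass_est_le1 b : side_mass b * side_est b <= 1.
Proof.
have := side_loss_01 b; have := side_mass_ge0 b; have := gamma_gt0.
rewrite /side_est mulrA => ? ? /andP[? ?]; rewrite ler_pdivrMr; nra.
Qed.

Lemma ltilde_ge0 (k j : I) : 0 <= ltilde k p j.
Proof. by rewrite ltilde_thr; case: eqP => _; rewrite ?side_est_ge0. Qed.

Lemma ltilde_mean (k : I) :
  \sum_j p j * ltilde k p j = side_mass (answers k) * side_est (answers k).
Proof.
rewrite (eq_bigr (fun j => p j * (if answers j == answers k then side_est (answers k) else 0)))
  => [|j _]; last by rewrite ltilde_thr.
rewrite (sum_by_side (fun b => if b == answers k then side_est (answers k) else 0)).
rewrite big_bool /=.
by case: (answers k) => /=; rewrite mulr0 ?addr0 ?add0r.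
Qed.

Lemma ltilde_sqr_mean_le (k : I) : \sum_j p j * ltilde k p j ^+ 2 <= ltilde k p k.
Proof.
rewrite (eq_bigr (fun j => ltilde k p k * (p j * ltilde k p j))) => [|j _]; last first.
  by rewrite ltilde_chosen ltilde_thr; case: eqP => _; rewrite ?expr2 ?mulr0 // mulrCA.
rewrite -mulr_sumr ltilde_mean ltilde_chosen -[leRHS]mulr1.
by rewrite ler_wpM2l ?side_est_ge0 ?side_mass_est_le1.
Qed.

(* The importance weighting is unbiased up to the implicit exploration term. *)
Lemma loss_thr_ltilde (k : I) :
  loss alpha lambda (f t h) (c t h) (thr k) = \sum_j p j * ltilde k p j + gamma * ltilde k p k.
Proof.
have := side_mass_ge0 (answers k); have := gamma_gt0.
rewrite loss_thr ltilde_mean ltilde_chosen /side_est => ? ?; field; lra.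
Qed.

Lemma exp_weights_ltilde (eta : R) (k : I) : 0 <= eta ->
  \sum_j p j * expR (- eta * ltilde k p j) <=
  expR (- eta * (\sum_j p j * ltilde k p j) + eta ^+ 2 / 2 * ltilde k p k).
Proof.
move=> eta_ge0; apply: le_trans (exp_weights_step p_ge0 p_sum1 (ltilde_ge0 k) eta_ge0) _.
rewrite ler_expR lerD2l ler_wpM2l ?ltilde_sqr_mean_le //.
by rewrite divr_ge0 ?sqr_ge0.
Qed.

Lemma side_mgf_le b :
  side_mass b * expR (2 * gamma * side_est b) <= side_mass b + 2 * gamma * side_loss b.
Proof. exact: mul_expR_ratio_le (side_mass_ge0 b) (side_loss_01 b). Qed.

Lemma mgf_by_side_le1 (y : bool -> R) (a : R) :
  \sum_(b : bool) side_mass b * expR (2 * gamma * y b) <= 1 + 2 * gamma * a ->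
  \sum_k p k * expR (2 * gamma * (y (answers k) - a)) <= 1.
Proof.
move=> y_mgf; apply: le_trans (expRN_mul1D_le1 (2 * gamma * a)).
under eq_bigr do rewrite mulrBr expRD mulrA.
rewrite -mulr_suml (sum_by_side (fun b => expR (2 * gamma * y b))) mulrC.
by rewrite ler_wpM2l ?expR_ge0.
Qed.

Lemma ltilde_chosen_mgf_le1 :
  \sum_k p k * expR (2 * gamma * (ltilde k p k - (side_loss true + side_loss false))) <= 1.
Proof.
under eq_bigr do rewrite ltilde_chosen.
apply: mgf_by_side_le1; rewrite big_bool /=.
have := side_mgf_le true; have := side_mgf_le false; have := sum_side_mass.
by rewrite big_bool /=; lra.
Qed.

Lemma ltilde_mgf_le1 (j : I) :
  \sum_k p k * expR (2 * gamma * (ltilde k p j - loss alpha lambda (f t h) (c t h) (thr j))) <= 1.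
Proof.
under eq_bigr do rewrite ltilde_thr loss_thr.
apply: (mgf_by_side_le1 (y := fun b => if answers j == b then side_est b else 0)).
have := side_mgf_le true; have := side_mgf_le false; have := side_mass_ge0 true.
have := side_mass_ge0 false; have := sum_side_mass; rewrite !big_bool /=.
by case: (answers j) => /=; rewrite mulr0 expR0 mulr1; lra.
Qed.

End Round.

Section PathSums.
Context {n : nat}.
Local Notation I := 'I_n.+1.

(* The round of the step [(h, k)] is [size h]. *)
Definition path_sum {V : nmodType} (F : seq I -> I -> V) (s : seq I) : V :=
  \sum_(0 <= i < size s) F (take i s) (nth ord0 s i).

Lemma path_sum_nil {V : nmodType} (F : seq I -> I -> V) : path_sum F [::] = 0.
Proof. by rewrite /path_sum big_geq. Qed.

Lemma path_sum_rcons {V : nmodType} (F : seq I -> I -> V) s k :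
  path_sum F (rcons s k) = path_sum F s + F s k.
Proof.
rewrite /path_sum size_rcons big_nat_recr //= nth_rcons ltnn eqxx -cats1 take_size_cat //.
congr (_ + _); apply: eq_big_nat => i /andP[_ lt_i_s].
by rewrite takel_cat ?nth_cat ?lt_i_s // ltnW.
Qed.

Lemma path_sum_tuple {V : nmodType} T (F : nat -> seq I -> I -> V) (s : T.-tuple I) :
  path_sum (fun h => F (size h) h) s = \sum_(i < T) F i (take i s) (tnth s i).
Proof.
rewrite /path_sum size_tuple big_mkord; apply: eq_bigr => i _.
by rewrite size_takel ?size_tuple 1?ltnW // (tnth_nth ord0).
Qed.

Lemma path_sumD {V : nmodType} (F G : seq I -> I -> V) s :
  path_sum (fun h k => F h k + G h k) s = path_sum F s + path_sum G s.
Proof. exact: big_split. Qed.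

Lemma path_sumB {V : zmodType} (F G : seq I -> I -> V) s :
  path_sum (fun h k => F h k - G h k) s = path_sum F s - path_sum G s.
Proof. exact: sumrB. Qed.

Lemma path_sumZ {S : pzRingType} (a : S) (F : seq I -> I -> S) s :
  path_sum (fun h k => a * F h k) s = a * path_sum F s.
Proof. by rewrite /path_sum mulr_sumr. Qed.

Lemma path_sum_le_const {S : numDomainType} (F : seq I -> I -> S) a s :
  (forall h k, F h k <= a) -> path_sum F s <= a * (size s)%:R.
Proof.
move=> F_le; apply: le_trans (ler_sum _ (fun i _ => F_le _ _)) _.
by rewrite sumr_const_nat subn0 mulr_natr.
Qed.

End PathSums.

Section Play.
Variables (R : realType) (n : nat).
Local Notation I := 'I_n.+1.
Variables (alpha lambda eta gamma : R) (f c : nat -> seq I -> R).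

Local Notation pdist := (pdist alpha lambda eta gamma f c).
Local Notation cumL := (cumL alpha lambda eta gamma f c).
Local Notation path_prob := (path_prob alpha lambda eta gamma f c).

Definition round_loss (h : seq I) (j : I) : R :=
  loss alpha lambda (f (size h) h) (c (size h) h) (thr R j).
Definition round_est (h : seq I) (k j : I) : R :=
  ltilde alpha lambda gamma f c (size h) h k (pdist h) j.

Lemma softmax_ge0 (L : I -> R) k : 0 <= softmax eta L k.
Proof.
by rewrite divr_ge0 ?expR_ge0 // sumr_ge0 // => j _; rewrite expR_ge0.
Qed.

Lemma sum_softmax (L : I -> R) : \sum_k softmax eta L k = 1.
Proof.
rewrite -mulr_suml divff // gt_eqF // (bigD1 ord0) //= ltr_pwDl ?expR_gt0 //.
by rewrite sumr_ge0 // => j _; rewrite expR_ge0.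
Qed.

Lemma pdist_ge0 h k : 0 <= pdist h k.
Proof. exact: softmax_ge0. Qed.

Lemma sum_pdist h : \sum_k pdist h k = 1.
Proof. exact: sum_softmax. Qed.

Lemma path_prob_ge0 h s : 0 <= path_prob h s.
Proof. by elim: s h => [|k s IHs] h //=; rewrite mulr_ge0 ?pdist_ge0. Qed.

Lemma sum_path_prob m h : \sum_(s : m.-tuple I) path_prob h s = 1.
Proof.
elim: m h => [|m IHm] h; first by rewrite sum_tuple0.
rewrite sum_tupleS -(sum_pdist h); apply: eq_bigr => k _.
by rewrite -mulr_sumr IHm mulr1.
Qed.

(* [path_sum z] is an exponential supermartingale along the play. *)
Lemma path_prob_mgf_le1 (z : seq I -> I -> R) :
  (forall h, \sum_k pdist h k * expR (z h k) <= 1) ->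
  forall m h, \sum_(s : m.-tuple I) path_prob h s *
                expR (path_sum z (h ++ s) - path_sum z h) <= 1.
Proof.
move=> z_mgf; elim=> [|m IHm] h.
  by rewrite sum_tuple0 /= cats0 subrr expR0 mulr1.
rewrite sum_tupleS; apply: le_trans (z_mgf h); apply: ler_sum => k _ /=.
pose tail_mgf (s : m.-tuple I) := path_prob (rcons h k) s *
  expR (path_sum z (rcons h k ++ s) - path_sum z (rcons h k)).
rewrite (eq_bigr (fun s => pdist h k * expR (z h k) * tail_mgf s)) => [|s _].
  by rewrite -mulr_sumr -[leRHS]mulr1 ler_wpM2l ?IHm // mulr_ge0 ?pdist_ge0 ?expR_ge0.
rewrite /tail_mgf -cat_rcons [path_sum z (rcons h k)]path_sum_rcons.
rewrite -[path_sum z _ - path_sum z h](subrK (z h k)) opprD addrA expRD; ring.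
Qed.

Lemma cumL_aux_rcons t h r k L :
  cumL_aux alpha lambda eta gamma f c t h (rcons r k) L =
  (fun j => cumL_aux alpha lambda eta gamma f c t h r L j +
     ltilde alpha lambda gamma f c (t + size r) (h ++ r) k
       (softmax eta (cumL_aux alpha lambda eta gamma f c t h r L)) j).
Proof.
elim: r t h L => [|k0 r IHr] t h L /=; first by rewrite addn0 cats0.
by rewrite IHr addSnnS cat_rcons.
Qed.

Lemma cumL_rcons h k j : cumL (rcons h k) j = cumL h j + round_est h k j.
Proof. by rewrite /Defs.cumL cumL_aux_rcons. Qed.

Lemma cumLE h j : cumL h j = path_sum (fun h k => round_est h k j) h.
Proof.
elim/last_ind: h => [|h k IHh]; first by rewrite path_sum_nil.
by rewrite cumL_rcons path_sum_rcons IHh.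
Qed.

End Play.

Lemma regret_le_of_fixed (R : realType) n alpha lambda (f c : nat -> seq 'I_n.+1 -> R)
    T (s : T.-tuple 'I_n.+1) (B : R) :
  (forall j, learner_loss alpha lambda f c s - fixed_loss alpha lambda f c s j <= B) ->
  regret alpha lambda f c s <= B.
Proof.
move=> le_B; rewrite /regret lerBlDr addrC -lerBlDr.
by apply/bigmin_geP; split=> [|k _]; rewrite lerBlDr addrC -lerBlDr.
Qed.

Lemma prob_regret_le_eq1 {R : realType} {n} alpha lambda eta gamma
    (f c : nat -> seq 'I_n.+1 -> R) T (B : R) :
  (forall s : T.-tuple 'I_n.+1, regret alpha lambda f c s <= B) ->
  prob_regret_le alpha lambda eta gamma f c T B = 1.
Proof. by move=> le_B; rewrite /prob_regret_le (eq_bigl xpredT) ?sum_path_prob. Qed.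

Section Regret.
Variables (R : realType) (n : nat).
Local Notation I := 'I_n.+1.
Variables (alpha lambda eta gamma : R) (f c : nat -> seq I -> R).
Hypotheses (gamma_gt0 : 0 < gamma) (eta_ge0 : 0 <= eta) (lambda_ge0 : 0 <= lambda).
Hypotheses (alpha_ge0 : 0 <= alpha) (alpha_le1 : alpha <= 1).
Hypothesis c_01 : forall t h, 0 <= c t h <= 1.

Local Notation pdist := (pdist alpha lambda eta gamma f c).
Local Notation cumL := (cumL alpha lambda eta gamma f c).
Local Notation path_prob := (path_prob alpha lambda eta gamma f c).
Local Notation round_est := (round_est alpha lambda eta gamma f c).
Local Notation round_loss := (round_loss alpha lambda f c).
Local Notation side_loss h := (side_loss alpha lambda c (size h) h).
Local Hint Resolve pdist_ge0 sum_pdist : core.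

Definition weight (h : seq I) : R := \sum_j expR (- eta * cumL h j).

Definition hedge_drift (h : seq I) (k : I) : R :=
  - eta * (\sum_j pdist h j * round_est h k j) + eta ^+ 2 / 2 * round_est h k k.

Lemma weight_gt0 h : 0 < weight h.
Proof.
rewrite /weight (bigD1 ord0) //= ltr_pwDl ?expR_gt0 //.
by rewrite sumr_ge0 // => i _; rewrite expR_ge0.
Qed.

Lemma weight_rcons h k :
  weight (rcons h k) = weight h * \sum_j pdist h j * expR (- eta * round_est h k j).
Proof.
have W_neq0 := lt0r_neq0 (weight_gt0 h).
rewrite /weight mulr_sumr; apply: eq_bigr => j _.
by rewrite cumL_rcons mulrDr expRD /Defs.pdist /softmax -/(weight h); field.
Qed.

Lemma weight_le h : weight h <= n.+1%:R * expR (path_sum hedge_drift h).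
Proof.
elim/last_ind: h => [|h k IHh].
  rewrite path_sum_nil expR0 mulr1 /weight /Defs.cumL /=.
  by under eq_bigr do rewrite mulr0 expR0; rewrite sumr_const card_ord.
rewrite weight_rcons path_sum_rcons expRD mulrA ler_pM ?(ltW (weight_gt0 h)) //.
  by rewrite sumr_ge0 // => j _; rewrite mulr_ge0 ?pdist_ge0 ?expR_ge0.
by apply: exp_weights_ltilde.
Qed.

Lemma exp_weights_regret h j :
  - eta * cumL h j <= ln n.+1%:R + path_sum hedge_drift h.
Proof.
rewrite -ler_expR expRD lnK ?posrE ?ltr0n //; apply: le_trans (weight_le h).
by rewrite /weight (bigD1 j) //= lerDl sumr_ge0 // => i _; rewrite expR_ge0.
Qed.

Lemma round_loss_est h k :
  round_loss h k = \sum_j pdist h j * round_est h k j + gamma * round_est h k k.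
Proof. by apply: loss_thr_ltilde. Qed.

Definition chosen_dev (h : seq I) (k : I) : R :=
  2 * gamma * (round_est h k k - (side_loss h true + side_loss h false)).
Definition est_dev (j : I) (h : seq I) (k : I) : R :=
  2 * gamma * (round_est h k j - round_loss h j).

Lemma chosen_dev_mgf_le1 h : \sum_k pdist h k * expR (chosen_dev h k) <= 1.
Proof. by apply: ltilde_chosen_mgf_le1. Qed.

Lemma est_dev_mgf_le1 j h : \sum_k pdist h k * expR (est_dev j h k) <= 1.
Proof. by apply: ltilde_mgf_le1. Qed.

Variable T : nat.

Lemma learner_loss_path (s : T.-tuple I) :
  learner_loss alpha lambda f c s =
  path_sum (fun h k => \sum_j pdist h j * round_est h k j) s +
  gamma * path_sum (fun h k => round_est h k k) s.
Proof.
rewrite /learner_loss -(path_sum_tuple (fun t h k => loss _ _ (f t h) (c t h) (thr R k))).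
by rewrite /path_sum mulr_sumr -big_split; apply: eq_bigr => i _; apply: round_loss_est.
Qed.

Lemma fixed_loss_path (s : T.-tuple I) j :
  fixed_loss alpha lambda f c s j = path_sum (fun h _ => round_loss h j) s.
Proof. by rewrite /fixed_loss -(path_sum_tuple (fun t h _ => loss _ _ (f t h) (c t h) _)). Qed.

Lemma regret_le_of_devs (s : T.-tuple I) (th1 th2 B : R) :
  eta = 2 * gamma ->
  path_sum chosen_dev s <= th1 -> (forall j, path_sum (est_dev j) s <= th2) ->
  ln n.+1%:R + th2 + eta * th1 + 2 * eta ^+ 2 * T%:R <= eta * B ->
  regret alpha lambda f c s <= B.
Proof.
move=> etaE chosen_le est_le B_ge; apply: regret_le_of_fixed => j.
have eta_gt0 : 0 < eta by rewrite etaE mulr_gt0.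
set A := path_sum (fun h k => \sum_j pdist h j * round_est h k j) s.
set D := path_sum (fun h k => round_est h k k) s.
set C := path_sum (fun h k => round_est h k j) s.
set F := path_sum (fun h _ => round_loss h j) s.
set L := path_sum (fun h _ => side_loss h true + side_loss h false) s.
have hedge : - eta * C <= ln n.+1%:R - eta * A + eta ^+ 2 / 2 * D.
  rewrite /A /C /D -cumLE -mulNr -!path_sumZ -addrA -path_sumD.
  exact: exp_weights_regret.
have dev_chosen : 2 * gamma * (D - L) <= th1.
  by rewrite /D /L -path_sumB -path_sumZ; exact: chosen_le.
have dev_j : 2 * gamma * (C - F) <= th2.
  by rewrite /C /F -path_sumB -path_sumZ; exact: est_le.
have L_le : L <= 2 * T%:R.
  suff : L <= 2 * (size s)%:R by rewrite size_tuple.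
  by apply: path_sum_le_const => h _; apply: side_loss_sum_le2.
rewrite learner_loss_path fixed_loss_path -/A -/D -/F -(ler_pM2l eta_gt0).
have := ler_wpM2l (ltW eta_gt0) dev_chosen; have := ler_wpM2l (sqr_ge0 eta) L_le.
by rewrite etaE in hedge B_ge *; lra.
Qed.

Lemma prob_regret_le_ge (th1 th2 B : R) :
  eta = 2 * gamma ->
  ln n.+1%:R + th2 + eta * th1 + 2 * eta ^+ 2 * T%:R <= eta * B ->
  1 - (expR (- th1) + n.+1%:R * expR (- th2)) <=
  prob_regret_le alpha lambda eta gamma f c T B.
Proof.
move=> etaE B_ge.
have play_mgf z : (forall h, \sum_k pdist h k * expR (z h k) <= 1) ->
    \sum_(s : T.-tuple I) path_prob [::] s * expR (path_sum z s) <= 1.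
  move=> /path_prob_mgf_le1 /(_ T [::]).
  by under eq_bigr do rewrite cat0s path_sum_nil subr0.
pose Z (i : option I) (s : T.-tuple I) :=
  if i is Some j then path_sum (est_dev j) s else path_sum chosen_dev s.
pose th (i : option I) := if i is Some _ then th2 else th1.
have -> : expR (- th1) + n.+1%:R * expR (- th2) = \sum_i expR (- th i).
  by rewrite sum_option /= sumr_const card_ord mulr_natl.
apply: (@exp_markov_union_bound _ _ _ _ Z) => [s||[j|]|s Z_le].
- exact: path_prob_ge0.
- exact: sum_path_prob.
- by apply: play_mgf => h; apply: est_dev_mgf_le1.
- by apply: play_mgf => h; apply: chosen_dev_mgf_le1.
- exact: regret_le_of_devs etaE (Z_le None) (fun j => Z_le (Some j)) B_ge.
Qed.

End Regret.

Lemma sqrt_tuning_budget {R : realType} (a x th : R) : 0 < a -> 0 < x ->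
  let eta := Num.sqrt (a / x) in
  a + (a + th) + eta * th + 2 * eta ^+ 2 * x =
  eta * (4 * Num.sqrt (x * a) + (1 + Num.sqrt (x / a)) * th).
Proof.
move=> a_gt0 x_gt0 eta.
have a_neq0 := lt0r_neq0 a_gt0; have x_neq0 := lt0r_neq0 x_gt0.
have etaM : eta * Num.sqrt (x * a) = a.
  rewrite -sqrtrM ?divr_ge0 ?ltW // (_ : a / x * (x * a) = a ^+ 2).
    by rewrite sqrtr_sqr gtr0_norm.
  by field; rewrite x_neq0.
have etaV : eta * Num.sqrt (x / a) = 1.
  rewrite -sqrtrM ?divr_ge0 ?ltW // (_ : a / x * (x / a) = 1) ?sqrtr1 //.
  by field; rewrite a_neq0 x_neq0.
have eta2 : eta ^+ 2 * x = a by rewrite sqr_sqrtr ?divr_ge0 ?ltW // divfK.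
rewrite mulrDr [eta * (4 * _)]mulrCA etaM [eta * ((1 + _) * th)]mulrA mulrDr mulr1 etaV.
by rewrite -mulrA eta2; lra.
Qed.

Lemma expRN_ln_split {R : realType} (N delta : R) : 0 < N -> 0 < delta ->
  expR (- ln (2 / delta)) + N * expR (- (ln N + ln (2 / delta))) = delta.
Proof.
move=> N_gt0 delta_gt0; have two_delta_gt0 : 0 < 2 / delta by rewrite divr_gt0.
rewrite opprD expRD !expRN !lnK ?posrE // invf_div mulrA mulfV ?gt_eqF // mul1r.
by rewrite -splitr.
Qed.

Theorem theorem4 (R : realType) (n T : nat) (alpha lambda delta : R)
  (f c : nat -> seq 'I_n.+1 -> R) :
  (1 <= n)%N ->
  0 < alpha < 1 -> 0 <= lambda -> 0 < delta < 1 ->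
  (forall t h, 0 <= f t h < 1) ->
  (forall t h, 0 <= c t h <= 1) ->
  let H := n.+1 in
  let eta := Num.sqrt (ln H%:R / T%:R) in
  let gamma := eta / 2 in
  prob_regret_le alpha lambda eta gamma f c T
    (4 * Num.sqrt (T%:R * ln H%:R)
     + (1 + Num.sqrt (T%:R / ln H%:R)) * ln (2 / delta))
  >= 1 - delta.
Proof.
(* The range of [f] is irrelevant: only the side of [f t h] a threshold lies on
   matters. *)
move=> n_ge1 /andP[alpha_gt0 alpha_lt1] lambda_ge0 /andP[delta_gt0 delta_lt1] _ c_01.
cbv zeta; set eta := Num.sqrt _; set gamma := eta / 2.
have lnH_gt0 : 0 < ln n.+1%:R :> R by rewrite ln_gt0 // ltr1n ltnS.
have th_gt0 : 0 < ln (2 / delta) by rewrite ln_gt0 // ltr_pdivlMr // mul1r; lra.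
case: T => [|T] in eta gamma *.
  (* [eta = sqrt (ln H / 0) = 0], the regret is [0] and the bound [ln (2 / delta)]. *)
  rewrite prob_regret_le_eq1; first lra.
  move=> s; apply: regret_le_of_fixed => j.
  by rewrite /learner_loss /fixed_loss !big_ord0 subrr !mul0r sqrtr0 mulr0 add0r addr0 mul1r ltW.
have T_gt0 : 0 < T.+1%:R :> R by rewrite ltr0n.
have eta_gt0 : 0 < eta by rewrite sqrtr_gt0 divr_gt0.
have gamma_gt0 : 0 < gamma by rewrite divr_gt0.
rewrite -[delta in 1 - delta](expRN_ln_split (ltr0n _ n.+1) delta_gt0).
apply: prob_regret_le_ge => //; try exact: ltW.
- by rewrite /gamma; lra.
- by rewrite sqrt_tuning_budget.
Qed.
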